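(* Let $0\le r\le m$, $H\in\mathcal G(m,r;2)$, $\mathbf S_r\in\mathrm{Sym}(r;2)$ and $\mathbf b\in\mathbb F_2^m$. Then $$\mathbf w^{H,\mathbf S_r}_{\mathbf b}=\mathbf G_D(\mathbf P_{\mathcal I}^T)\,\mathbf G_U(\tilde{\mathbf S}_r)\,\mathbf G_\Omega(r)\,\mathbf Z(m,r)\,\mathbf e_{\mathbf b},$$ where $\mathbf Z(m,r)=\mathbf I_{2^r}\otimes\sigma_z^{\otimes(m-r)}$. In particular each binary subspace chirp is, up to a sign $\pm1$, the $\mathbf b$-th column of the unitary matrix $\mathbf G_D(\mathbf P_{\mathcal I}^T)\mathbf G_U(\tilde{\mathbf S}_r)\mathbf G_\Omega(r)$.
   Context: Fix $m\ge1$, $N=2^m$. Binary vectors are columns over $\mathbb F_2$; $\mathrm{Sym}(r;2)$ is the set of symmetric binary $r\times r$ matrices, $\mathcal G(m,r;2)$ the set of $r$-dimensional subspaces of $\mathbb F_2^m$. The standard basis of $\mathbb C^N=(\mathbb C^2)^{\otimes m}$ is $\{\mathbf e_{\mathbf v}=\mathbf e_{v_1}\otimes\cdots\otimes\mathbf e_{v_m}:\mathbf v\in\mathbb F_2^m\}$ and vectors of $\mathbb C^N$ are indexed by $\mathbb F_2^m$. Whenever a binary expression appears in an exponent of $i$, binary entries are lifted to the integers $0,1$ and the expression is evaluated in $\mathbb Z$ (equivalently mod 4). $\sigma_z=\mathrm{diag}(1,-1)$. Clifford-type matrices: for $\mathbf Q\in\mathrm{GL}(m;2)$, $\mathbf G_D(\mathbf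 Q)$ is the permutation matrix with $\mathbf e_{\mathbf v}\mapsto\mathbf e_{\mathbf Q^T\mathbf v}$; for $\mathbf S\in\mathrm{Sym}(m;2)$, $\mathbf G_U(\mathbf S)=\mathrm{diag}(i^{\mathbf v^T\mathbf S\mathbf v})_{\mathbf v\in\mathbb F_2^m}$; $\mathbf G_\Omega(r)=\mathbf H_2^{\otimes r}\otimes\mathbf I_{2^{m-r}}$ with $\mathbf H_2=\frac1{\sqrt2}\begin{pmatrix}1&1\\1&-1\end{pmatrix}$. Echelon data: for $0\le r\le m$ and $H\in\mathcal G(m,r;2)$, let $\mathbf H_{\mathcal I}$ be the unique $m\times r$ binary matrix in column reduced echelon form with column space $H$: there are indices $i_1<\dots<i_r$, $\mathcal I=\{i_1,\dots,i_r\}$, such that rows $i_1,\dots,i_r$ of $\mathbf H_{\mathcal I}$ form $\mathbf I_r$ and column $j$ of $\mathbf H_{\mathcal I}$ is zero in all rows above row $i_j$. Let $\mathbf I_{\mathcal I}$ (resp. $\mathbf I_{\tilde{\mathcal I}}$) be the $m\times r$ (resp. $m\times(m-r)$) matrix whose columns are the standard basis vectors $\mathbf e_i$ with $i\in\mathcal I$ (resp. $i\notin\mathcal I$), in increasing order of $i$. Put $\mathbf P_{\mathcal I}=[\mathbf H_{\mathcal I}\ \ \mathbf I_{\tilde{\mathcal I}}]\in\mathrm{GL}(m;2)$, and define the $m\times(m-r)$ matrix $\tilde{\mathbf H}_{\mathcal I}$ by $\mathbf P_{\mathcal I}^{-T}=[\mathbf I_{\mathcal I}\ \ \tilde{\mathbf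 H}_{\mathcal I}]$. (For $r=0$: $H=\{0\}$, $\mathbf P_{\mathcal I}=\mathbf I_m$.) For $\mathbf S_r\in\mathrm{Sym}(r;2)$, $\tilde{\mathbf S}_r\in\mathrm{Sym}(m;2)$ denotes the matrix with $\mathbf S_r$ as its upper-left $r\times r$ block and zeros elsewhere. Binary subspace chirps: let $f(\mathbf v,\mathbf w,r)=\prod_{i=r+1}^m(1+v_i+w_i)$ computed in $\mathbb F_2$ and viewed in $\{0,1\}$ (so $f=1$ iff $\mathbf v,\mathbf w$ agree in their last $m-r$ coordinates). For $\mathbf b\in\mathbb F_2^m$, the binary subspace chirp (BSSC) $\mathbf w_{\mathbf b}=\mathbf w^{H,\mathbf S_r}_{\mathbf b}\in\mathbb C^N$ has entries $\mathbf w_{\mathbf b}(\mathbf a)=2^{-r/2}\,i^{\mathbf u^T\tilde{\mathbf S}_r\mathbf u+2\mathbf b^T\mathbf u}\,f(\mathbf b,\mathbf u,r)$ with $\mathbf u=\mathbf P_{\mathcal I}^{-1}\mathbf a\in\mathbb F_2^m$, for $\mathbf a\in\mathbb F_2^m$. The integer $r$ is its rank. *)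

From HB Require Import structures.
From mathcomp Require Import all_boot all_order all_algebra.
From mathcomp Require Import algC.
Set Implicit Arguments. Unset Strict Implicit. Unset Printing Implicit Defensive.
Import Order.TTheory GRing.Theory Num.Theory.
Local Open Scope ring_scope.

(* Binary vectors of F_2^m are columns 'cV['F_2]_m; vectors of C^N (N = 2^m)
   are functions indexed by F_2^m, and N x N complex matrices are functions
   of two such indices (row, column). *)
Definition bvec (m : nat) := 'cV['F_2]_m.
Definition cvec (m : nat) := bvec m -> algC.
Definition cmat (m : nat) := bvec m -> bvec m -> algC.

Definition lift2 (x : 'F_2) : nat := nat_of_ord x.

Definition mapp m (A : cmat m) (v : cvec m) : cvec m :=
  fun x => \sum_(z : bvec m) A x z * v z.
Definition mmul m (A B : cmat m) : cmat m :=
  fun x y => \sum_(z : bvec m) A x z * B z y.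
Definition madj m (A : cmat m) : cmat m := fun x y => (A y x)^*.
Definition mid m : cmat m := fun x y => (x == y)%:R.

Definition ebasis m (b : bvec m) : cvec m := fun x => (x == b)%:R.

(* 2x2 complex matrices indexed by F_2 and their Kronecker product
   M_0 (x) M_1 (x) ... (x) M_{m-1}  (first tensor factor = first coordinate) *)
Definition mat2 := 'F_2 -> 'F_2 -> algC.
Definition ktensor m (M : 'I_m -> mat2) : cmat m :=
  fun v w => \prod_(i < m) M i (v i ord0) (w i ord0).

Definition I2 : mat2 := fun a c => (a == c)%:R.
Definition H2 : mat2 := fun a c => (-1) ^+ (lift2 a * lift2 c) / sqrtC 2.
Definition sigmaz : mat2 := fun a c => (a == c)%:R * (-1) ^+ lift2 a.

Definition GD m (Q : 'M['F_2]_m) : cmat m := fun x v => (x == Q^T *m v)%:R.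
(* v^T S v computed over the integers *)
Definition qform m (S : 'M['F_2]_m) (v : bvec m) : nat :=
  \sum_(i < m) \sum_(j < m) lift2 (v i ord0) * lift2 (S i j) * lift2 (v j ord0).
Definition GU m (S : 'M['F_2]_m) : cmat m :=
  fun x v => (x == v)%:R * 'i ^+ qform S v.
Definition GOmega m (r : nat) : cmat m :=
  ktensor (fun i : 'I_m => if (i < r)%N then H2 else I2).
Definition Zmr m (r : nat) : cmat m :=
  ktensor (fun i : 'I_m => if (i < r)%N then I2 else sigmaz).

Definition Stilde m r (S : 'M['F_2]_r) : 'M['F_2]_m :=
  \matrix_(i < m, j < m)
    match @insub _ (fun n => n < r)%N _ (val i),
          @insub _ (fun n => n < r)%N _ (val j) with
    | Some i', Some j' => S i' j'
    | _, _ => 0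
    end.

(* Column reduced echelon form data of an m x r matrix HI with pivot rows
   piv 0 < ... < piv (r-1), and cpiv the increasing enumeration of the
   non-pivot indices. *)
Definition echelon_data m r (HI : 'M['F_2]_(m, r)) (piv : 'I_r -> 'I_m)
    (cpiv : 'I_(m - r) -> 'I_m) : Prop :=
  [/\ (forall j k : 'I_r, (j < k)%N -> (piv j < piv k)%N),
      (forall j k : 'I_r, HI (piv k) j = (k == j)%:R),
      (forall (i : 'I_m) (j : 'I_r), (i < piv j)%N -> HI i j = 0),
      (forall j k : 'I_(m - r), (j < k)%N -> (cpiv j < cpiv k)%N) &
      (forall (j : 'I_r) (k : 'I_(m - r)), cpiv k != piv j)].

(* P_I = [H_I  I_{~I}] *)
Definition PI m r (HI : 'M['F_2]_(m, r)) (cpiv : 'I_(m - r) -> 'I_m)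
  : 'M['F_2]_m :=
  \matrix_(i < m, k < m)
    match @insub _ (fun n => n < r)%N _ (val k) with
    | Some k' => HI i k'
    | None =>
      match @insub _ (fun n => n < m - r)%N _ (val k - r)%N with
      | Some k'' => (i == cpiv k'')%:R
      | None => 0
      end
    end.

(* f(v,w,r) = prod_{i=r+1}^m (1 + v_i + w_i) (1-based), as 0/1 *)
Definition fagree m r (v w : bvec m) : algC :=
  (lift2 (\prod_(i < m | (r <= i)%N) (1 + v i ord0 + w i ord0)))%:R.

(* binary subspace chirp w_b^{H,S_r} (H given through its echelon data) *)
Definition bssc m r (HI : 'M['F_2]_(m, r)) (cpiv : 'I_(m - r) -> 'I_m)
    (S : 'M['F_2]_r) (b : bvec m) : cvec m :=
  fun a =>
    let u := invmx (PI HI cpiv) *m a in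
    (sqrtC 2 ^+ r)^-1
    * 'i ^+ (qform (Stilde m S) u
             + 2 * \sum_(i < m) lift2 (b i ord0) * lift2 (u i ord0))
    * fagree r b u.

Arguments GOmega : clear implicits.
Arguments Zmr : clear implicits.
Arguments mid : clear implicits.

(* Write u = P_I^{-1} a.  The chirp entry w_b(a) is
     2^{-r/2} i^{u^T S~ u} (-1)^{b.u} f(b,u,r),
   and the proof reads this factorisation off the right-hand side:
   - P_I is invertible (its pivot rows and non-pivot rows expose all
     coordinates of a kernel vector), so G_D(P_I^T) acts by a -> P_I^{-1} a;
   - G_U(S~) is the diagonal phase i^{u^T S~ u};
   - Z(m,r) is diagonal, sending e_b to (-1)^{b_{r+1}+...+b_m} e_b;
   - the b-th column of the Kronecker product G_Omega(r) at u is
     2^{-r/2} (-1)^{b.u} on the first r bits times the identity indicator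
     of the last m - r bits; the sign of Z absorbs the extra (-1)^{b.u}
     there, leaving exactly f(b,u,r).
   Unitarity of U = G_D G_U G_Omega follows because a Kronecker product of
   unitary 2x2 matrices is unitary and G_D, G_U are a permutation and a
   diagonal phase.  The sign s of the statement is the sign of Z e_b. *)

From HB Require Import structures.
From mathcomp Require Import all_boot all_order all_algebra.
From mathcomp Require Import algC.
From Stdlib Require Import FunctionalExtensionality.
Set Implicit Arguments. Unset Strict Implicit. Unset Printing Implicit Defensive.
Import Order.TTheory GRing.Theory Num.Theory.
Local Open Scope ring_scope.

Lemma mulmx_unit_row n (A : 'M['F_2]_n) (x : 'cV['F_2]_n) i (k0 : 'I_n) :
  (forall k, A i k * x k 0 = (k == k0)%:R * x k 0) -> (A *m x) i 0 = x k0 0.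
Proof.
move=> Ai; rewrite mxE (bigD1 k0) //= Ai eqxx mul1r big1 ?addr0 // => k kk0.
by rewrite Ai (negbTE kk0) mul0r.
Qed.

Section EchelonBasis.

Variables (m r : nat) (HI : 'M['F_2]_(m, r)).
Variables (piv : 'I_r -> 'I_m) (cpiv : 'I_(m - r) -> 'I_m).
Hypothesis hech : echelon_data HI piv cpiv.

Lemma PI_low (i k : 'I_m) (j : 'I_r) :
  val k = val j -> PI HI cpiv i k = HI i j.
Proof.
move=> kj; rewrite mxE; case: insubP => [k' _ k'k | ]; last by rewrite kj ltn_ord.
by congr (HI i _); apply: val_inj; rewrite /= k'k kj.
Qed.

Lemma PI_high (i k : 'I_m) (l : 'I_(m - r)) :
  val k = (r + l)%N -> PI HI cpiv i k = (i == cpiv l)%:R.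
Proof.
move=> kl; rewrite mxE; case: insubP => [k' | _]; first by rewrite kl ltnNge leq_addr.
case: insubP => [l' _ l'l | ]; last by rewrite kl addKn ltn_ord.
by congr ((i == cpiv _)%:R); apply: val_inj; rewrite /= l'l kl addKn.
Qed.

Definition high_index (k : 'I_m) (hk : (r <= k)%N) : 'I_(m - r) :=
  Ordinal (ltn_sub2r (leq_ltn_trans hk (ltn_ord k)) (ltn_ord k) : (k - r < m - r)%N).

Lemma high_indexK (k : 'I_m) (hk : (r <= k)%N) : val k = (r + high_index hk)%N.
Proof. by rewrite /= subnKC. Qed.

(* Row piv j of P_I is the j-th unit row: pivot rows of H_I are those of the
   identity, and the columns e_{cpiv l} avoid the pivot rows. *)
Lemma PI_pivot_row (j : 'I_r) (k : 'I_m) :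
  PI HI cpiv (piv j) k = (val k == val j)%:R.
Proof.
case: hech => _ pivI _ _ disj; have [kr | rk] := ltnP k r.
  have kj : val k = val (Ordinal kr) by [].
  by rewrite (PI_low _ kj) pivI eq_sym -(inj_eq val_inj).
rewrite (PI_high _ (high_indexK rk)) eq_sym (negbTE (disj _ _)).
by case: eqP => // kj; move: rk; rewrite kj leqNgt ltn_ord.
Qed.

Lemma PI_nonpivot_row (l : 'I_(m - r)) (k : 'I_m) :
  (r <= k)%N -> PI HI cpiv (cpiv l) k = (val k == r + l)%N%:R.
Proof.
case: hech => _ _ _ cpiv_incr _ rk.
have cpiv_inj : injective cpiv by apply: inc_inj; apply: le_mono.
rewrite (PI_high _ (high_indexK rk)) (inj_eq cpiv_inj) high_indexK eqn_add2l.
by rewrite eq_sym.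
Qed.

(* P_I has trivial kernel: the pivot rows read off x_0..x_{r-1}, and then the
   non-pivot rows read off x_r..x_{m-1}. *)
Lemma PI_ker (x : 'cV['F_2]_m) : PI HI cpiv *m x = 0 -> x = 0.
Proof.
move=> Px0.
have low0 (k : 'I_m) : (k < r)%N -> x k 0 = 0.
  move=> kr; rewrite -(@mulmx_unit_row _ (PI HI cpiv) x (piv (Ordinal kr))) ?Px0 ?mxE // => k'.
  by rewrite PI_pivot_row -(inj_eq val_inj).
apply/matrixP => k z; rewrite (ord1 z) mxE.
have [kr | rk] := ltnP k r; first exact: low0.
rewrite -(@mulmx_unit_row _ (PI HI cpiv) x (cpiv (high_index rk))) ?Px0 ?mxE // => k'.
have [k'r | rk'] := ltnP k' r; first by rewrite low0 // !mulr0.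
by rewrite PI_nonpivot_row // -high_indexK (inj_eq val_inj).
Qed.

Lemma PI_unit : PI HI cpiv \in unitmx.
Proof.
rewrite -unitmx_tr -row_free_unit; apply: inj_row_free => v vP0.
apply: trmx_inj; rewrite trmx0; apply: PI_ker.
by rewrite -[PI _ _]trmxK -trmx_mul vP0 trmx0.
Qed.

End EchelonBasis.
Lemma lift2M (x y : 'F_2) : lift2 (x * y) = (lift2 x * lift2 y)%N.
Proof. by case: x y => [[|[|?]] ?] [[|[|?]] ?]. Qed.

Lemma lift2_prod (I : Type) (s : seq I) (P : pred I) (F : I -> 'F_2) :
  lift2 (\prod_(i <- s | P i) F i) = (\prod_(i <- s | P i) lift2 (F i))%N.
Proof. exact: (big_morph lift2 lift2M). Qed.

Lemma lift2_agree (x y : 'F_2) : lift2 (1 + x + y) = (x == y).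
Proof. by case: x y => [[|[|?]] ?] [[|[|?]] ?]. Qed.

Lemma lift2_idem (x : 'F_2) : (lift2 x * lift2 x)%N = lift2 x.
Proof. by case: x => [[|[|?]] ?]. Qed.

Lemma sum_F2 (f : 'F_2 -> algC) : \sum_(c : 'F_2) f c = f 0 + f 1.
Proof.
by rewrite big_ord_recl big_ord_recl big_ord0 addr0; congr (f _ + f _); apply: val_inj.
Qed.

Lemma prod_eq_coord m (x y : bvec m) :
  \prod_(i < m) ((x i ord0 == y i ord0)%:R : algC) = (x == y)%:R.
Proof.
have [->|xy] := eqVneq x y; first by rewrite big1 // => i _; rewrite eqxx.
have [i xiy] : exists i, x i ord0 != y i ord0.
  apply/existsP; apply: contraNT xy; rewrite negb_exists => /forallP xy.
  by apply/eqP/matrixP => i j; rewrite (ord1 j); apply/eqP/negPn/xy.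
by rewrite (bigD1 i) //= (negbTE xiy) mul0r.
Qed.

Definition unitary2 (M : mat2) : Prop :=
  forall a c, \sum_(d : 'F_2) M a d * (M c d)^* = (a == c)%:R.
Definition unitary m (A : cmat m) : Prop := mmul A (madj A) = mid m.

Lemma I2_unitary : unitary2 I2.
Proof.
move=> a c; rewrite (bigD1 c) //= /I2 eqxx rmorph1 mulr1 big1 ?addr0 // => d dc.
by rewrite [c == d]eq_sym (negbTE dc) rmorph0 mulr0.
Qed.

Lemma H2_real a c : (H2 a c)^* = H2 a c.
Proof.
by rewrite /H2 rmorphM rmorphXn rmorphN1 fmorphV /= geC0_conj // sqrtC_ge0 ler0n.
Qed.

Lemma H2_unitary : unitary2 H2.
Proof.
move=> a c; under eq_bigr do rewrite H2_real /H2 mulrACA -expr2 exprVn sqrtCK.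
rewrite -big_distrl /= sum_F2.
case: a c => [[|[|?]] ?] [[|[|?]] ?] //;
  rewrite /lift2 /= ?expr0 ?expr1 ?mulr1 ?mul1r ?mulN1r ?opprK ?subrr ?mul0r //.
all: by rewrite -[1 + 1]/(2%:R) divff // pnatr_eq0.
Qed.

(* A Kronecker product of unitary 2x2 matrices is unitary: the sum over
   F_2^m factors as a product of sums over F_2 (distributivity). *)
Lemma ktensor_unitary m (M : 'I_m -> mat2) :
  (forall i, unitary2 (M i)) -> unitary (ktensor M).
Proof.
move=> Munit; apply: functional_extensionality => v.
apply: functional_extensionality => w; rewrite /mmul /madj /mid /ktensor.
under eq_bigr do rewrite rmorph_prod -big_split /=.
rewrite (reindex (fun f : {ffun 'I_m -> 'F_2} => \col_i f i)) /=; last first.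
  apply: onW_bij; exists (fun z : bvec m => [ffun i => z i ord0]) => [f|z].
    by apply/ffunP => i; rewrite ffunE mxE.
  by apply/matrixP => i j; rewrite mxE ffunE (ord1 j).
under eq_bigr do under eq_bigr do rewrite mxE.
rewrite -(bigA_distr_bigA (fun i d => M i (v i ord0) d * (M i (w i ord0) d)^*)).
by rewrite -prod_eq_coord; apply: eq_bigr => i _; apply: Munit.
Qed.

Lemma mapp_GD m (P : 'M['F_2]_m) (v : cvec m) a :
  P \in unitmx -> mapp (GD P^T) v a = v (invmx P *m a).
Proof.
move=> Pu; rewrite /mapp /GD trmxK (bigD1 (invmx P *m a)) //= mulKVmx // eqxx mul1r.
rewrite big1 ?addr0 // => z za; case: eqP => [az | _]; last by rewrite mul0r.
by move: za; rewrite az mulKmx // eqxx.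
Qed.

Lemma mapp_GU m (S : 'M['F_2]_m) (v : cvec m) x :
  mapp (GU S) v x = 'i ^+ qform S x * v x.
Proof.
rewrite /mapp (bigD1 x) //= /GU eqxx mul1r big1 ?addr0 // => z zx.
by rewrite eq_sym (negbTE zx) !mul0r.
Qed.

Lemma mapp_ebasis m (A : cmat m) b x : mapp A (ebasis b) x = A x b.
Proof.
rewrite /mapp (bigD1 b) //= /ebasis eqxx mulr1 big1 ?addr0 // => z zb.
by rewrite (negbTE zb) mulr0.
Qed.

Definition zsign m r (b : bvec m) : algC :=
  (-1) ^+ (\sum_(i < m | (r <= i)%N) lift2 (b i ord0)).

Lemma zsign_pm1 m r (b : bvec m) : zsign r b = 1 \/ zsign r b = -1.
Proof. by rewrite /zsign -signr_odd; case: odd; [right | left]. Qed.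

Lemma Zmr_entry m r (x b : bvec m) : Zmr m r x b = (x == b)%:R * zsign r b.
Proof.
rewrite /Zmr /ktensor /zsign -prodrXr [in RHS]big_mkcond -prod_eq_coord -big_split.
apply: eq_bigr => i _; case: ltnP => _ /=; first by rewrite mulr1.
by rewrite /sigmaz; case: eqP => [-> | _]; rewrite ?mul0r.
Qed.

Lemma mapp_Zmr_ebasis m r (A : cmat m) (b x : bvec m) :
  mapp A (mapp (Zmr m r) (ebasis b)) x = A x b * zsign r b.
Proof.
rewrite /mapp; under eq_bigr do rewrite -/(mapp _ _ _) mapp_ebasis Zmr_entry.
rewrite (bigD1 b) //= eqxx mul1r big1 ?addr0 // => z zb.
by rewrite (negbTE zb) mul0r mulr0.
Qed.

Lemma fagreeE m r (v w : bvec m) :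
  fagree r v w = \prod_(i < m) (if (r <= i)%N then (v i ord0 == w i ord0)%:R else 1).
Proof.
rewrite /fagree lift2_prod natr_prod -big_mkcond.
by apply: eq_bigr => i _; rewrite lift2_agree.
Qed.

Lemma prod_sqrt2_low m r : (r <= m)%N ->
  \prod_(i < m) (if (i < r)%N then (sqrtC 2)^-1 else 1) = (sqrtC 2 ^+ r)^-1 :> algC.
Proof.
move=> rm; rewrite -big_mkcond /= -(big_ord_widen m (fun _ => (sqrtC 2)^-1)) //.
by rewrite prodr_const card_ord exprVn.
Qed.

(* Key entry formula: the b-th column of G_Omega(r) Z(m,r) at u is
   2^{-r/2} (-1)^{b.u} f(b,u,r): Hadamard factors on the first r bits,
   sign-twisted identity factors on the last m - r bits. *)
Lemma GOmega_Zmr_entry m r (u b : bvec m) : (r <= m)%N ->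
  GOmega m r u b * zsign r b
  = (sqrtC 2 ^+ r)^-1 * (-1) ^+ (\sum_(i < m) lift2 (b i ord0) * lift2 (u i ord0))
    * fagree r b u.
Proof.
move=> rm; rewrite -(prod_sqrt2_low rm) fagreeE -prodrXr -!big_split /=.
rewrite /GOmega /ktensor /zsign -prodrXr [X in _ * X = _]big_mkcond -big_split /=.
apply: eq_bigr => i _; case: ltnP => _ /=.
  by rewrite /H2 mulnC !mulr1 mulrC.
rewrite /I2 mul1r eq_sym; case: eqP => [-> | _]; last by rewrite !mulr0 mul0r.
by rewrite lift2_idem mulr1 mul1r.
Qed.

Lemma GD_GU_entry m (P S : 'M['F_2]_m) (W : cmat m) a y : P \in unitmx ->
  mmul (GD P^T) (mmul (GU S) W) a y
  = 'i ^+ qform S (invmx P *m a) * W (invmx P *m a) y.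
Proof.
move=> Pu; rewrite -[LHS]/(mapp (GD P^T) (fun z => mmul (GU S) W z y) a).
by rewrite mapp_GD // -[mmul _ _ _ _]/(mapp (GU S) (fun w => W w y) _) mapp_GU.
Qed.

(* G_D and G_U are a permutation and a diagonal phase matrix, so they preserve
   unitarity of W. *)
Lemma GD_GU_unitary m (P S : 'M['F_2]_m) (W : cmat m) :
  P \in unitmx -> unitary W -> unitary (mmul (GD P^T) (mmul (GU S) W)).
Proof.
move=> Pu Wunit; set U := mmul _ _; apply: functional_extensionality => x.
apply: functional_extensionality => y; rewrite /mmul /madj /mid.
under eq_bigr do rewrite /U !GD_GU_entry // rmorphM mulrACA.
rewrite -big_distrr /=.
have := congr1 (fun A => A (invmx P *m x) (invmx P *m y)) Wunit.
rewrite /mmul /madj /mid => ->.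
have [-> | xy] := eqVneq x y.
  by rewrite eqxx mulr1 -normCK normrX normCi !expr1n.
case: eqP => [Pxy | _]; last by rewrite mulr0.
by case/eqP: xy; rewrite -(mulKVmx Pu x) Pxy mulKVmx.
Qed.

(* The chirp entry at a, with u = P_I^{-1} a, is the phase i^{u^T S u} times
   the b-th column of G_Omega(r) Z(m,r) at u; the factor i^{2 b^T u} is the
   Hadamard sign (-1)^{b.u}. *)
Lemma bssc_entry m r (HI : 'M['F_2]_(m, r)) cpiv S (b a : bvec m) : (r <= m)%N ->
  let u := invmx (PI HI cpiv) *m a in
  bssc HI cpiv S b a = 'i ^+ qform (Stilde m S) u * (GOmega m r u b * zsign r b).
Proof.
move=> rm u; rewrite /bssc -/u GOmega_Zmr_entry // exprD exprM sqrCi.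
by rewrite [sqrtC 2 ^- r * _]mulrCA [RHS]mulrA.
Qed.

Theorem mainTheorem4 (m r : nat) (hrm : (r <= m)%N)
  (H : 'M['F_2]_m) (hH : \rank H = r)
  (HI : 'M['F_2]_(m, r)) (piv : 'I_r -> 'I_m) (cpiv : 'I_(m - r) -> 'I_m)
  (hech : echelon_data HI piv cpiv)
  (hspan : (HI^T == H)%MS)
  (S : 'M['F_2]_r) (hS : S^T = S)
  (b : bvec m) :
  let U := mmul (GD (PI HI cpiv)^T) (mmul (GU (Stilde m S)) (GOmega m r)) in
  [/\ forall a : bvec m,
        bssc HI cpiv S b a
        = mapp (GD (PI HI cpiv)^T)
            (mapp (GU (Stilde m S))
              (mapp (GOmega m r) (mapp (Zmr m r) (ebasis b)))) a,
      exists s : algC, (s = 1 \/ s = -1) /\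
        forall a : bvec m, bssc HI cpiv S b a = s * U a b &
      mmul U (madj U) = mid m].
Proof.
move=> U; have Pu := PI_unit hech.
split.
- by move=> a; rewrite bssc_entry // mapp_GD // mapp_GU mapp_Zmr_ebasis.
- exists (zsign r b); split; first exact: zsign_pm1.
  by move=> a; rewrite bssc_entry // /U GD_GU_entry // [RHS]mulrCA [zsign r b * _]mulrC.
- apply: GD_GU_unitary => //; apply: ktensor_unitary => i.
  by case: ifP => _; [exact: H2_unitary | exact: I2_unitary].
Qed.
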